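(* Let $L\subseteq Q$ be a dense extension of Lie algebras such that $Q$ is a multiplicatively semiprime algebra of quotients of $L$. Then for every essential ideal $I$ of $L$, $\mathrm{l.ann}_{A(Q)}(\widetilde I)=0$.
   Context: Lie algebras over a commutative unital ring $\Phi$. $\mathrm{ad}_x(y)=[x,y]$; $A(Q)$ is the associative subalgebra of $\mathrm{End}_\Phi(Q)$ generated by all $\mathrm{ad}_x$, $x\in Q$, and $M(Q)$ is the one generated by the identity and all $\mathrm{ad}_x$. $A_Q(L)$ is the subalgebra of $A(Q)$ generated by $\{\mathrm{ad}_x:x\in L\}$, and for an ideal $I$ of $L$, $\widetilde I$ is the two-sided ideal of $A_Q(L)$ generated by $\{\mathrm{ad}_x:x\in I\}$. $\mathrm{l.ann}_B(X)=\{b\in B:bX=0\}$. An extension $L\subseteq Q$ is dense if the only $\mu\in M(Q)$ with $\mu(L)=0$ is $\mu=0$. A Lie algebra is semiprime if $[I,I]\neq0$ for every nonzero ideal $I$; $Q$ is multiplicatively semiprime if $Q$ and $M(Q)$ are semiprime. An ideal is essential if it meets every nonzero ideal nontrivially. $Q$ is an algebra of quotients of $L$ if for every nonzero $q\in Q$ there is an ideal $J$ of $L$ with $\mathrm{Ann}_L(J)=\{a\in L:[a,J]=0\}=0$ and $0\ne[J,q]\subseteq L$. *)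

From HB Require Import structures.
From mathcomp Require Import all_boot all_order all_algebra.
Set Implicit Arguments. Unset Strict Implicit. Unset Printing Implicit Defensive.
Import GRing.Theory.
Local Open Scope ring_scope.

Section LieDefs.
Variables (Phi : comPzRingType) (Q : lmodType Phi) (br : Q -> Q -> Q).

Definition is_lie_bracket : Prop :=
  [/\ (forall (a : Phi) x y z, br (a *: x + y) z = a *: br x z + br y z),
      (forall (a : Phi) x y z, br z (a *: x + y) = a *: br z x + br z y),
      (forall x, br x x = 0) &
      (forall x y z, br x (br y z) + br y (br z x) + br z (br x y) = 0)].

Definition is_submodule (S : Q -> Prop) : Prop :=
  [/\ S 0, (forall x y, S x -> S y -> S (x + y)) &
      (forall (a : Phi) x, S x -> S (a *: x))].

Definition is_lie_subalgebra (L : Q -> Prop) : Prop :=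
  is_submodule L /\ (forall x y, L x -> L y -> L (br x y)).

Definition is_lie_ideal (L I : Q -> Prop) : Prop :=
  [/\ forall x, I x -> L x, is_submodule I &
      (forall x y, L x -> I y -> I (br x y))].

Definition nonzero_set (S : Q -> Prop) : Prop := exists x, S x /\ x <> 0.

Definition ad (x : Q) : Q -> Q := fun y => br x y.

(* Subalgebra of End(Q) generated by a set S of endomorphisms
   (non-unital; extensionally closed). *)
Inductive gen_alg (S : (Q -> Q) -> Prop) : (Q -> Q) -> Prop :=
  | ga_gen f : S f -> gen_alg S f
  | ga_zero : gen_alg S (fun _ => 0)
  | ga_add f g : gen_alg S f -> gen_alg S g -> gen_alg S (fun q => f q + g q)
  | ga_scale (a : Phi) f : gen_alg S f -> gen_alg S (fun q => a *: f q)
  | ga_comp f g : gen_alg S f -> gen_alg S g -> gen_alg S (fun q => f (g q))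
  | ga_ext f g : gen_alg S f -> (forall q, f q = g q) -> gen_alg S g.

Definition A_alg : (Q -> Q) -> Prop := gen_alg (fun f => exists x, f = ad x).
Definition M_alg : (Q -> Q) -> Prop :=
  gen_alg (fun f => f = id \/ exists x, f = ad x).
Definition A_QL (L : Q -> Prop) : (Q -> Q) -> Prop :=
  gen_alg (fun f => exists2 x, L x & f = ad x).

Inductive gen_ideal (A S : (Q -> Q) -> Prop) : (Q -> Q) -> Prop :=
  | gi_gen f : S f -> gen_ideal A S f
  | gi_zero : gen_ideal A S (fun _ => 0)
  | gi_add f g : gen_ideal A S f -> gen_ideal A S g ->
                 gen_ideal A S (fun q => f q + g q)
  | gi_scale (a : Phi) f : gen_ideal A S f -> gen_ideal A S (fun q => a *: f q)
  | gi_lmul a f : A a -> gen_ideal A S f -> gen_ideal A S (fun q => a (f q))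
  | gi_rmul f a : gen_ideal A S f -> A a -> gen_ideal A S (fun q => f (a q))
  | gi_ext f g : gen_ideal A S f -> (forall q, f q = g q) -> gen_ideal A S g.

Definition tilde (L I : Q -> Prop) : (Q -> Q) -> Prop :=
  gen_ideal (A_QL L) (fun f => exists2 x, I x & f = ad x).

Definition l_ann (B X : (Q -> Q) -> Prop) : (Q -> Q) -> Prop :=
  fun b => B b /\ (forall t, X t -> forall q, b (t q) = 0).

Definition is_zero_map (f : Q -> Q) : Prop := forall q, f q = 0.

Definition dense_ext (L : Q -> Prop) : Prop :=
  forall mu, M_alg mu -> (forall x, L x -> mu x = 0) -> is_zero_map mu.

Definition lie_semiprime : Prop :=
  forall I, is_lie_ideal (fun _ => True) I -> nonzero_set I ->
    exists x y, [/\ I x, I y & br x y <> 0].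

Definition is_assoc_ideal (A J : (Q -> Q) -> Prop) : Prop :=
  [/\ forall f, J f -> A f,
      J (fun _ => 0),
      (forall f g, J f -> J g -> J (fun q => f q + g q)),
      (forall (a : Phi) f, J f -> J (fun q => a *: f q)) &
      (forall a f, A a -> J f -> J (fun q => a (f q)) /\ J (fun q => f (a q)))].

Definition assoc_semiprime (A : (Q -> Q) -> Prop) : Prop :=
  forall J, is_assoc_ideal A J -> (exists f, J f /\ ~ is_zero_map f) ->
    exists f g, [/\ J f, J g & ~ is_zero_map (fun q => f (g q))].

Definition mult_semiprime : Prop := lie_semiprime /\ assoc_semiprime M_alg.

Definition essential_ideal (L I : Q -> Prop) : Prop :=
  is_lie_ideal L I /\
  forall J, is_lie_ideal L J -> nonzero_set J ->
    exists x, [/\ I x, J x & x <> 0].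

Definition Ann_L (L J : Q -> Prop) : Q -> Prop :=
  fun a => L a /\ forall j, J j -> br a j = 0.

Definition algebra_of_quotients (L : Q -> Prop) : Prop :=
  forall q, q <> 0 -> exists J, [/\ is_lie_ideal L J,
    (forall a, Ann_L L J a -> a = 0),
    (exists j, J j /\ br j q <> 0) &
    (forall j, J j -> L (br j q))].

End LieDefs.

(* If b kills ad_I, density lets b also kill M(Q) ad_I.  Then for x in I the
   map ad_x m b satisfies (ad_x m b) M(Q) (ad_x m b) = 0, so it vanishes by
   semiprimeness of M(Q): every value of b is centralized by M(Q) acting into
   I.  The elements of L with that property form an ideal of L; if b were
   nonzero on L, the algebra of quotients condition would make this ideal
   nonzero, so by essentiality it meets I in some y <> 0.  But then
   ad_y M(Q) ad_y = 0, so ad_y = 0, i.e. y is central in Q, which an algebra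
   of quotients forbids.  Density finally gives b = 0 from b(L) = 0. *)

From HB Require Import structures.
From mathcomp Require Import all_boot all_order all_algebra.
Set Implicit Arguments. Unset Strict Implicit. Unset Printing Implicit Defensive.
Import GRing.Theory.
Local Open Scope ring_scope.

Section LinearFun.
Variables (R : comPzRingType) (V : lmodType R) (f : V -> V).
Hypothesis f_linear : linear f.

Let fL : {linear V -> V} := HB.pack f (GRing.isLinear.Build _ _ _ _ f f_linear).

Lemma linear_fun0 : f 0 = 0.
Proof. exact: (raddf0 fL). Qed.

Lemma linear_funD x y : f (x + y) = f x + f y.
Proof. exact: (raddfD fL). Qed.

Lemma linear_funN x : f (- x) = - f x.
Proof. exact: (raddfN fL). Qed.

Lemma linear_funZ a x : f (a *: x) = a *: f x.
Proof. exact: (linearZZ fL). Qed.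

End LinearFun.

Section GeneratedAlgebra.
Variables (Phi : comPzRingType) (Q : lmodType Phi) (S : (Q -> Q) -> Prop).
Hypothesis S_linear : forall f, S f -> linear f.

Lemma gen_alg_linear f : gen_alg S f -> linear f.
Proof.
elim=> [g /S_linear // | | g h _ hg _ hh | c g _ hg | g h _ hg _ hh
  | g h _ hg e] a x y.
- by rewrite scaler0 addr0.
- by rewrite hg hh scalerDr addrACA.
- by rewrite hg scalerDr !scalerA mulrC.
- by rewrite hh hg.
- by rewrite -!e hg.
Qed.

Lemma gen_ideal_sub_gen_alg T g :
  (forall f, T f -> gen_alg S f) -> gen_ideal (gen_alg S) T g -> gen_alg S g.
Proof.
move=> T_sub; elim=> {g} [g /T_sub // | | g h _ hg _ hh | c g _ hg
  | a g Aa _ hg | g a _ hg Aa | g h _ hg e].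
- exact: ga_zero.
- exact: ga_add.
- exact: ga_scale.
- exact: ga_comp.
- exact: ga_comp.
- exact: ga_ext e.
Qed.

Lemma gen_ideal_assoc_ideal T :
  (forall f, T f -> gen_alg S f) ->
  is_assoc_ideal (gen_alg S) (gen_ideal (gen_alg S) T).
Proof.
move=> T_sub; split.
- by move=> f; apply: gen_ideal_sub_gen_alg.
- exact: gi_zero.
- by move=> f g; apply: gi_add.
- by move=> a f; apply: gi_scale.
- by move=> a f Aa Jf; split; [apply: gi_lmul | apply: gi_rmul].
Qed.

Section Sandwich.
Hypothesis S_id : S id.
Variable f : Q -> Q.
Hypothesis f_in : gen_alg S f.
Hypothesis f_sandwich0 : forall m, gen_alg S m -> forall q, f (m (f q)) = 0.

Let Jf := gen_ideal (gen_alg S) (fun g => g = f).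

Let Jf_sub g : Jf g -> gen_alg S g.
Proof. by apply: gen_ideal_sub_gen_alg => _ ->. Qed.

Let Jf_linear g : Jf g -> linear g.
Proof. by move/Jf_sub/gen_alg_linear. Qed.

Lemma gen_ideal_sandwich0 g m q :
  Jf g -> gen_alg S m -> g (m (f q)) = 0.
Proof.
move=> Jg; elim: Jg m => {g} [_ -> | | g h _ hg _ hh | c g _ hg
  | a g Aa _ hg | g a _ hg Aa | g h _ hg e] m Am //=.
- exact: f_sandwich0.
- by rewrite hg // hh // addr0.
- by rewrite hg // scaler0.
- by rewrite hg // (linear_fun0 (gen_alg_linear Aa)).
- exact: (hg (fun z => a (m z)) (ga_comp Aa Am)).
- by rewrite -e hg.
Qed.

Lemma gen_ideal_sqr0 g1 g2 q : Jf g1 -> Jf g2 -> g1 (g2 q) = 0.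
Proof.
move=> Jg1 Jg2; elim: Jg2 g1 Jg1 q => {g2} [_ -> | | g h _ hg _ hh | c g _ hg
  | a g Aa _ hg | g a _ hg Aa | g h _ hg e] g1 Jg1 q /=.
- exact: (gen_ideal_sandwich0 (m := id) q Jg1 (ga_gen S_id)).
- exact: (linear_fun0 (Jf_linear Jg1)).
- by rewrite (linear_funD (Jf_linear Jg1)) hg // hh // addr0.
- by rewrite (linear_funZ (Jf_linear Jg1)) hg // scaler0.
- exact: (hg (fun z => g1 (a z)) (gi_rmul Jg1 Aa)).
- exact: hg.
- by rewrite -e hg.
Qed.

Lemma semiprime_sandwich0 : assoc_semiprime (gen_alg S) -> is_zero_map f.
Proof.
move=> S_semiprime q; case: (eqVneq (f q) 0) => // fq_neq0; exfalso.
have [||g1 [g2 [Jg1 Jg2 g12_neq0]]] := S_semiprime Jf.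
- by apply: gen_ideal_assoc_ideal => _ ->.
- by exists f; split; [apply: gi_gen | move/(_ q)/eqP; rewrite (negPf fq_neq0)].
- by apply: g12_neq0 => z; apply: gen_ideal_sqr0 z Jg1 Jg2.
Qed.

End Sandwich.
End GeneratedAlgebra.

Section LieAlgebra.
Variables (Phi : comPzRingType) (Q : lmodType Phi) (br : Q -> Q -> Q).
Hypothesis br_lie : is_lie_bracket br.

Lemma ad_linear z : linear (ad br z).
Proof. by case: br_lie => _ brr _ _ a x y; rewrite /ad brr. Qed.

Lemma lie_br0 z : br z 0 = 0.
Proof. exact: (linear_fun0 (ad_linear z)). Qed.

Lemma lie_brDr z x y : br z (x + y) = br z x + br z y.
Proof. exact: (linear_funD (ad_linear z)). Qed.

Lemma lie_brN z x : br z (- x) = - br z x.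
Proof. exact: (linear_funN (ad_linear z)). Qed.

Lemma lie_brZ z a x : br z (a *: x) = a *: br z x.
Proof. exact: (linear_funZ (ad_linear z)). Qed.

Lemma lie_anticomm x y : br x y = - br y x.
Proof.
have [brl _ br_alt _] := br_lie.
have brDl x1 x2 z : br (x1 + x2) z = br x1 z + br x2 z.
  by have := brl 1 x1 x2 z; rewrite !scale1r.
have := br_alt (x + y); rewrite brDl !lie_brDr !br_alt.
by rewrite add0r addr0 => /eqP; rewrite addr_eq0 => /eqP.
Qed.

Lemma M_alg_linear f : M_alg br f -> linear f.
Proof. by apply: gen_alg_linear => _ [-> | [z ->]] //; apply: ad_linear. Qed.

Lemma M_alg_id : M_alg br id.
Proof. by apply: ga_gen; left. Qed.

Lemma M_alg_ad x : M_alg br (ad br x).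
Proof. by apply: ga_gen; right; exists x. Qed.

Lemma A_alg_sub_M f : A_alg br f -> M_alg br f.
Proof.
elim=> [g [x ->] | | g h _ hg _ hh | c g _ hg | g h _ hg _ hh | g h _ hg e].
- exact: M_alg_ad.
- exact: ga_zero.
- exact: ga_add.
- exact: ga_scale.
- exact: ga_comp.
- exact: ga_ext e.
Qed.

Lemma M_semiprime_sandwich0 f :
  assoc_semiprime (M_alg br) -> M_alg br f ->
  (forall m, M_alg br m -> forall q, f (m (f q)) = 0) -> is_zero_map f.
Proof.
move=> M_semiprime Mf f_sandwich0; apply: semiprime_sandwich0 Mf f_sandwich0 _ => //.
- by move=> _ [-> | [z ->]] //; apply: ad_linear.
- by left.
Qed.

Lemma lie_ideal_brr L I x l : is_lie_ideal br L I -> I x -> L l -> I (br x l).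
Proof.
case=> _ [_ _ IZ] IB Ix Ll.
by rewrite lie_anticomm -scaleN1r; apply/IZ/IB.
Qed.

Lemma quotients_center0 L y :
  algebra_of_quotients br L -> (forall q, br y q = 0) -> y = 0.
Proof.
move=> quot y_central; case: (eqVneq y 0) => // /eqP /quot [J [_ _ [j [_ +]] _]].
by rewrite lie_anticomm y_central oppr0.
Qed.

Section Ideal.
Variables (L I : Q -> Prop).
Hypotheses (L_sub : is_lie_subalgebra br L) (I_ideal : is_lie_ideal br L I).
Hypotheses (L_dense : dense_ext br L) (M_semiprime : assoc_semiprime (M_alg br)).

Definition M_centralizer z := forall m, M_alg br m -> forall x, I x -> br x (m z) = 0.

Lemma M_centralizerM m z : M_alg br m -> M_centralizer z -> M_centralizer (m z).
Proof. by move=> Mm Cz m' Mm'; apply: (Cz (fun u => m' (m u)) (ga_comp Mm' Mm)). Qed.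

Lemma lie_ideal_M_centralizer :
  is_lie_ideal br L (fun z => L z /\ M_centralizer z).
Proof.
have [[L0 LD LZ] LB] := L_sub; split=> [x [] // | | x y Lx [Ly Cy]].
- split=> [| x y [Lx Cx] [Ly Cy] | a x [Lx Cx]].
  + by split=> // m Mm x Ix; rewrite (linear_fun0 (M_alg_linear Mm)) lie_br0.
  + split=> [|m Mm z Iz]; first exact: LD.
    by rewrite (linear_funD (M_alg_linear Mm)) lie_brDr Cx // Cy // addr0.
  + split=> [|m Mm z Iz]; first exact: LZ.
    by rewrite (linear_funZ (M_alg_linear Mm)) lie_brZ Cx // scaler0.
- by split; [apply: LB | apply: M_centralizerM (M_alg_ad x) Cy].
Qed.

Lemma M_centralizer_ad0 y : I y -> M_centralizer y -> is_zero_map (ad br y).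
Proof.
move=> Iy Cy; apply: (M_semiprime_sandwich0 M_semiprime (M_alg_ad y)) => m Mm q.
rewrite /ad (lie_anticomm y q) (linear_funN (M_alg_linear Mm)).
by rewrite lie_brN (M_centralizerM (M_alg_ad q) Cy) ?oppr0.
Qed.

Section Annihilator.
Variable b : Q -> Q.
Hypotheses (Mb : M_alg br b) (b_ad0 : forall x, I x -> forall q, b (br x q) = 0).

Lemma dense_lann_ad_M m x q : M_alg br m -> I x -> b (m (br x q)) = 0.
Proof.
pose kills mu := forall x, I x -> forall q, b (mu (br x q)) = 0.
suff kills_comp m' : M_alg br m' ->
    forall mu, M_alg br mu -> kills mu -> kills (fun z => mu (m' z)).
  by move=> Mm Ix; apply: (kills_comp m Mm id M_alg_id b_ad0).
elim=> [g [-> | [z ->]] | | g h Mg hg Mh hh | c g Mg hg | g h Mg hg Mh hh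
  | g h Mg hg e] mu Mmu kmu y Iy p /=.
- exact: kmu.
(* b mu ad_z ad_y lies in M(Q) and vanishes on L, since [y, L] is inside I. *)
- have Mpsi : M_alg br (fun u => b (mu (br z (br y u)))).
    exact: ga_comp (ga_comp Mb Mmu) (ga_comp (M_alg_ad z) (M_alg_ad y)).
  apply: (L_dense Mpsi) => l Ll; rewrite lie_anticomm.
  rewrite (linear_funN (M_alg_linear Mmu)) (linear_funN (M_alg_linear Mb)).
  by rewrite kmu ?oppr0 //; apply: lie_ideal_brr I_ideal Iy Ll.
- by rewrite (linear_fun0 (M_alg_linear Mmu)) (linear_fun0 (M_alg_linear Mb)).
- rewrite (linear_funD (M_alg_linear Mmu)) (linear_funD (M_alg_linear Mb)).
  by rewrite hg // hh // addr0.
- rewrite (linear_funZ (M_alg_linear Mmu)) (linear_funZ (M_alg_linear Mb)).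
  by rewrite hg // scaler0.
- exact: (hh (fun u => mu (g u)) (ga_comp Mmu Mg) (hg mu Mmu kmu)).
- by rewrite -e; apply: hg.
Qed.

Lemma lann_ad_M_centralizer q : M_centralizer (b q).
Proof.
move=> m Mm x Ix.
have Mf : M_alg br (fun z => br x (m (b z))).
  exact: ga_comp (M_alg_ad x) (ga_comp Mm Mb).
apply: (M_semiprime_sandwich0 M_semiprime Mf) => m' Mm' z.
by rewrite dense_lann_ad_M // (linear_fun0 (M_alg_linear Mm)) lie_br0.
Qed.

End Annihilator.
End Ideal.
End LieAlgebra.

Theorem mainTheorem17 (Phi : comPzRingType) (Q : lmodType Phi) (br : Q -> Q -> Q)
  (L : Q -> Prop) :
  is_lie_bracket br -> is_lie_subalgebra br L ->
  dense_ext br L -> mult_semiprime br -> algebra_of_quotients br L ->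
  forall I : Q -> Prop, essential_ideal br L I ->
    forall b, l_ann (A_alg br) (tilde br L I) b -> is_zero_map b.
Proof.
move=> br_lie L_sub L_dense [_ M_semiprime] quot I [I_ideal I_essential] b [Ab b_ann].
have Mb := A_alg_sub_M Ab.
have b_ad0 x : I x -> forall q, b (br x q) = 0.
  by move=> Ix; apply: (b_ann (ad br x)); apply: gi_gen; exists x.
have bC := lann_ad_M_centralizer br_lie I_ideal L_dense M_semiprime Mb b_ad0.
apply: (L_dense _ Mb) => l Ll; case: (eqVneq (b l) 0) => // /eqP bl_neq0; exfalso.
have [J [_ _ [j [Jj jbl_neq0]] JL]] := quot _ bl_neq0.
have [|y [Iy [_ Cy] y_neq0]] := I_essential _ (lie_ideal_M_centralizer br_lie I L_sub).
  exists (br j (b l)); split=> //; split; first exact: JL Jj.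
  exact: M_centralizerM (M_alg_ad br j) (bC l).
apply: y_neq0; apply: (quotients_center0 br_lie quot).
exact: (M_centralizer_ad0 br_lie M_semiprime Iy Cy).
Qed.
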